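(* Suppose the difference-in-means estimator $\widehat\tau_{DIM}$ is computed from outcomes generated under a balanced $K$-cluster randomized design $\mathcal{D}(\mathcal{C})$, and the potential outcomes follow the linear model $Y_i(\mathbf{Z}) = \alpha_i + \beta_i Z_i + \gamma_i e_i(\mathbf{Z})$ with fixed real coefficients $\alpha_i,\beta_i,\gamma_i$. Then $$\tau - \mathbb{E}_{\mathbf{Z}\sim\mathcal{D}(\mathcal{C})}[\widehat\tau_{DIM}] = \frac{2}{N}\cdot\frac{K}{K-1}\sum_{i\in[N]}\sum_{j\notin\mathcal{C}(i)} \gamma_i \sum_{s\in[M]} \frac{w_{is}}{\sum_{s'\in[M]} w_{is'}}\,\frac{w_{js}}{\sum_{k\in[N]} w_{ks}}.$$ Moreover, fix real numbers $\Gamma_0\le\Gamma_1$, not both zero. Then, among all partitions $\mathcal{C}$ of $[N]$ into $K$ equally sized clusters (with $K$ and $K_T$ fixed), the set of minimizers of $\max_{\boldsymbol\gamma\in[\Gamma_0,\Gamma_1]^N}\left|\tau-\mathbb{E}_{\mathbf{Z}\sim\mathcal{D}(\mathcal{C})}[\widehat\tau_{DIM}]\right|$ equals the set of minimizers of $\mathcal{H}(\mathcal{C})$.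
   Context: Setting: $N$ experimental units $[N]$ and $M$ interference units $[M]$, with known weights $w_{is}\ge 0$ for $i\in[N]$, $s\in[M]$; assume $\sum_{s} w_{is}>0$ for every $i$ and $\sum_i w_{is}>0$ for every $s$. A treatment assignment is $\mathbf{Z}\in\{-1,1\}^N$ ($1$ = treatment, $-1$ = control). The dose of interference unit $s$ is $d_s=\frac{\sum_{i\in[N]} w_{is}Z_i}{\sum_{i\in[N]} w_{is}}$ and the exposure of experimental unit $i$ is $e_i=e_i(\mathbf{Z})=\frac{\sum_{s\in[M]} w_{is}d_s}{\sum_{s\in[M]} w_{is}}$. Balanced $K$-cluster randomized design: $K\ge 2$ divides $N$, $\mathcal{C}=\{C_1,\dots,C_K\}$ is a partition of $[N]$ into $K$ clusters of equal size $N/K$, $\mathcal{C}(i)$ denotes the cluster containing $i$, and $\mathcal{D}(\mathcal{C})$ is the distribution of $\mathbf{Z}$ obtained by choosing $K_T$ clusters uniformly at random (fixed integer $0<K_T<K$), setting $Z_i=1$ for all units in these clusters and $Z_i=-1$ otherwise; $K_C=K-K_T$. Let $N_T=NK_T/K$ and $N_C=N-N_T$ (numbers of treated and control units). The difference-in-means estimator is $\widehat\tau_{DIM}=\frac{1}{N_T}\sum_{i:Z_i=1}Y_i-\frac{1}{N_C}\sum_{i:Z_i=-1}Y_i$, where $Y_i=Y_i(\mathbf{Z})$ is the observed outcome. The average total treatment effect is $\tau=\frac1N\sum_{i\in[N]}\big(Y_i(\mathbf{1})-Y_i(-\mathbf{1})\big)$. The clustering objective is $\mathcal{H}(\mathcal{C})=\sum_{i\in[N]}\sum_{j\in[N]\setminus\mathcal{C}(i)}\sum_{s\in[M]}\frac{w_{is}}{\sum_{s'\in[M]}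 w_{is'}}\frac{w_{js}}{\sum_{k\in[N]} w_{ks}}$. *)

From HB Require Import structures.
From mathcomp Require Import all_boot all_order all_algebra.
From mathcomp Require Import all_classical all_reals.

Set Implicit Arguments. Unset Strict Implicit. Unset Printing Implicit Defensive.
Import Order.TTheory GRing.Theory Num.Theory.
Local Open Scope ring_scope.

Section Defs.
Variables (R : realType) (N M : nat).

Definition rowsum (w : 'I_N -> 'I_M -> R) (i : 'I_N) : R := \sum_(s < M) w i s.
Definition colsum (w : 'I_N -> 'I_M -> R) (s : 'I_M) : R := \sum_(k < N) w k s.

Definition dose (w : 'I_N -> 'I_M -> R) (Z : 'I_N -> R) (s : 'I_M) : R :=
  (\sum_(i < N) w i s * Z i) / colsum w s.

Definition exposure (w : 'I_N -> 'I_M -> R) (Z : 'I_N -> R) (i : 'I_N) : R :=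
  (\sum_(s < M) w i s * dose w Z s) / rowsum w i.

Definition lin_outcome (w : 'I_N -> 'I_M -> R) (alpha beta gamma : 'I_N -> R)
  (Z : 'I_N -> R) (i : 'I_N) : R :=
  alpha i + beta i * Z i + gamma i * exposure w Z i.

Definition balanced_partition (P : {set {set 'I_N}}) (K : nat) : bool :=
  [&& finset.partition P [set: 'I_N], #|P| == K & [forall B in P, #|B| == (N %/ K)%N]].

Definition assign (S : {set {set 'I_N}}) (i : 'I_N) : R :=
  if i \in finset.cover S then 1 else -1.

Definition E_design (P : {set {set 'I_N}}) (KT : nat) (f : ('I_N -> R) -> R) : R :=
  (\sum_(S : {set {set 'I_N}} | (S \subset P) && (#|S| == KT)) f (assign S))
  / #|[set S : {set {set 'I_N}} | (S \subset P) && (#|S| == KT)]|%:R.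

Definition NT (K KT : nat) : R := ((N %/ K) * KT)%N%:R.
Definition NC (K KT : nat) : R := N%:R - NT K KT.

Definition tau_DIM (K KT : nat) (Y : ('I_N -> R) -> 'I_N -> R) (Z : 'I_N -> R) : R :=
  (NT K KT)^-1 * (\sum_(i < N | Z i == 1) Y Z i)
  - (NC K KT)^-1 * (\sum_(i < N | Z i == -1) Y Z i).

Definition tau (Y : ('I_N -> R) -> 'I_N -> R) : R :=
  N%:R^-1 * \sum_(i < N) (Y (fun _ => 1) i - Y (fun _ => -1) i).

Definition Hobj (w : 'I_N -> 'I_M -> R) (P : {set {set 'I_N}}) : R :=
  \sum_(i < N) \sum_(j < N | j \notin finset.pblock P i)
     \sum_(s < M) (w i s / rowsum w i) * (w j s / colsum w s).

Definition worst_bias (w : 'I_N -> 'I_M -> R) (K KT : nat)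
  (alpha beta : 'I_N -> R) (G0 G1 : R) (P : {set {set 'I_N}}) : R :=
  sup [set `|tau (lin_outcome w alpha beta gamma)
             - E_design P KT (tau_DIM K KT (lin_outcome w alpha beta gamma))|
       | gamma in [set g : 'I_N -> R | forall i, G0 <= g i <= G1]].

Definition is_minimizer (K : nat) (f : {set {set 'I_N}} -> R) (P : {set {set 'I_N}}) : Prop :=
  balanced_partition P K /\
  forall P', balanced_partition P' K -> f P <= f P'.

End Defs.

(* Writing Z_i = 2 x_i - 1 with x_i the treatment indicator, the exposure is
   linear, e_i(Z) = sum_j v_ij Z_j with v_ij >= 0 and sum_j v_ij = 1, so under
   the linear model E[tau_DIM] only involves the first two moments of the
   indicators.  Under the cluster design P(x_i = 1) = K_T/K, and P(x_i = x_j = 1)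
   equals K_T/K when i and j share a cluster and K_T(K_T-1)/(K(K-1)) otherwise;
   hence only pairs in different clusters bias the estimator, and the bias is
   c * sum_i gamma_i h_i with c = 2K/(N(K-1)), h_i = sum_{j not in C(i)} v_ij
   >= 0 and sum_i h_i = H(C).  Over the box [G0,G1]^N its absolute value is maximal for a
   constant gamma, equal to c * max(|G0|,|G1|) * H(C), and a positive multiple
   of H has the same minimizers. *)

From HB Require Import structures.
From mathcomp Require Import all_boot all_order all_algebra.
From mathcomp Require Import all_classical all_reals.
(* Re-imported so that the finset lemma names shadow those of classical_sets. *)
From mathcomp Require Import fintype finset ring lra.
Import Order.TTheory GRing.Theory Num.Theory.
Local Open Scope ring_scope.
Set Implicit Arguments. Unset Strict Implicit. Unset Printing Implicit Defensive.

Lemma binB_ffact n m t : (t <= m)%N ->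
  ('C(n - t, m - t) * n ^_ t = 'C(n, m) * m ^_ t)%N.
Proof.
elim: t n m => [|t IHt] n m; first by rewrite !subn0 !ffactn0.
case: m => // m; case: n => [|n] ltm.
  by rewrite ffact0n /= muln0 bin0n.
by rewrite !ffactSS !subSS mulnCA IHt // mulnA mul_bin_diag -mulnA mulnCA.
Qed.

(* Stated with falling factorials so that it also covers #|D| > k, where both
   sides vanish. *)
Lemma card_draws_containing (T : finType) (P D : {set T}) k :
  D \subset P ->
  (#|[set S : {set T} | [&& S \subset P, #|S| == k & D \subset S]]| * #|P| ^_ #|D|
   = 'C(#|P|, k) * k ^_ #|D|)%N.
Proof.
move=> sDP; have [leDk|ltkD] := leqP #|D| k; last first.
  rewrite (ffact_small ltkD) muln0; apply/eqP; rewrite muln_eq0 cards_eq0; apply/orP; left.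
  apply/eqP/setP => S; rewrite !inE; apply/negbTE; apply/and3P => -[_ /eqP cS sDS].
  by move: ltkD; rewrite -cS ltnNge subset_leq_card.
rewrite -binB_ffact //; congr (_ * _)%N.
have cPD : #|P :\: D| = (#|P| - #|D|)%N by rewrite cardsD (setIidPr sDP).
have UDK (A : {set T}) : A \subset P :\: D -> (A :|: D) :\: D = A.
  by rewrite subsetD setDUl setDv setU0 => /andP[_ /setDidPl].
have injUD : {in [set A : {set T} | A \subset P :\: D & #|A| == (k - #|D|)%N] &,
               injective (fun A => A :|: D)}.
  by move=> A B; rewrite !inE => /andP[sA _] /andP[sB _] eqAB; rewrite -(UDK A) // eqAB UDK.
rewrite -cPD -cards_draws -(card_in_imset injUD).
apply: eq_card => S; rewrite !inE; apply/idP/imsetP.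
- case/and3P=> sSP /eqP cS sDS; exists (S :\: D).
    by rewrite inE setSD //= cardsD (setIidPr sDS) cS.
  apply/setP => x; rewrite !inE.
  by case: (boolP (x \in D)) => [/(subsetP sDS)->|]; rewrite ?orbT ?orbF.
- case=> A; rewrite inE => /andP[sA /eqP cA] ->.
  rewrite subUset sDP subsetUr (subset_trans sA (subsetDl _ _)) /=.
  rewrite cardsU (disjoint_setI0 _) ?cards0 ?subn0 ?cA ?subnK ?eqxx //.
  by move: sA; rewrite subsetD => /andP[].
Qed.

Section Exposure.
Variables (R : realType) (N M : nat) (w : 'I_N -> 'I_M -> R).
Hypothesis w_ge0 : forall i s, 0 <= w i s.
Hypothesis rowsum_gt0 : forall i, 0 < rowsum w i.
Hypothesis colsum_gt0 : forall s, 0 < colsum w s.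

Definition exposure_weight (i j : 'I_N) : R :=
  \sum_(s < M) (w i s / rowsum w i) * (w j s / colsum w s).

Lemma exposureE Z i : exposure w Z i = \sum_(j < N) exposure_weight i j * Z j.
Proof.
rewrite /exposure /dose /exposure_weight.
under [RHS]eq_bigr do rewrite mulr_suml.
rewrite exchange_big /= mulr_suml; apply: eq_bigr => s _.
rewrite mulr_suml mulr_sumr mulr_suml; apply: eq_bigr => j _.
by field; rewrite !gt_eqF.
Qed.

Lemma exposure_weight_ge0 i j : 0 <= exposure_weight i j.
Proof. by apply: sumr_ge0 => s _; rewrite mulr_ge0 ?divr_ge0 ?w_ge0 ?ltW. Qed.

Lemma sum_exposure_weight i : \sum_(j < N) exposure_weight i j = 1.
Proof.
have dose1 s : dose w (fun _ => 1) s = 1.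
  rewrite /dose; under eq_bigr do rewrite mulr1.
  by rewrite divff ?gt_eqF ?colsum_gt0.
have := exposureE (fun _ => 1) i; under [RHS]eq_bigr do rewrite mulr1.
move=> <-; rewrite /exposure; under eq_bigr do rewrite dose1 mulr1.
by rewrite divff ?gt_eqF ?rowsum_gt0.
Qed.

End Exposure.

Section DesignExpectation.
Variables (R : realType) (N : nat) (P : {set {set 'I_N}}) (KT : nat).
Local Notation E := (@E_design R N P KT).
Implicit Types f g : ('I_N -> R) -> R.

Lemma E_designD f g : E (fun Z => f Z + g Z) = E f + E g.
Proof. by rewrite /E_design big_split mulrDl. Qed.

Lemma E_designZ c f : E (fun Z => c * f Z) = c * E f.
Proof. by rewrite /E_design -mulr_sumr mulrA. Qed.

Lemma E_design_sum (I : finType) (F : I -> ('I_N -> R) -> R) :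
  E (fun Z => \sum_i F i Z) = \sum_i E (F i).
Proof. by rewrite /E_design exchange_big mulr_suml. Qed.

Lemma eq_E_design f g :
  (forall S : {set {set 'I_N}}, S \subset P -> f (assign R S) = g (assign R S)) -> E f = E g.
Proof.
by move=> efg; rewrite /E_design; congr (_ / _); apply: eq_bigr => S /andP[/efg].
Qed.

Hypothesis KT_le : (KT <= #|P|)%N.

Lemma card_draws_neq0 :
  #|[set S : {set {set 'I_N}} | (S \subset P) && (#|S| == KT)]|%:R != 0 :> R.
Proof. by rewrite cards_draws pnatr_eq0 -lt0n bin_gt0. Qed.

Lemma E_design_cst c : E (fun _ => c) = c.
Proof.
rewrite /E_design sumr_const.
rewrite (@eq_card _ _ [set S : {set {set 'I_N}} | (S \subset P) && (#|S| == KT)]).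
  by rewrite -[c *+ _]mulr_natr mulfK ?card_draws_neq0.
by move=> S; rewrite inE.
Qed.

Lemma E_design_event (D : {set {set 'I_N}}) f : D \subset P ->
  (forall S : {set {set 'I_N}}, S \subset P -> f (assign R S) = (D \subset S)%:R) ->
  E f = (KT ^_ #|D|)%:R / (#|P| ^_ #|D|)%:R.
Proof.
move=> sDP fE; rewrite /E_design.
rewrite (eq_bigr (fun S : {set {set 'I_N}} => (D \subset S)%:R : R)); last first.
  by move=> S /andP[/fE].
have -> : \sum_(S : {set {set 'I_N}} | (S \subset P) && (#|S| == KT)) (D \subset S)%:R
    = #|[set S : {set {set 'I_N}} | [&& S \subset P, #|S| == KT & D \subset S]]|%:R :> R.
  rewrite -sum1_card natr_sum big_mkcond [RHS]big_mkcond /=.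
  apply: eq_bigr => S _; rewrite inE.
  by case: (S \subset P) (#|S| == KT) (D \subset S) => [] [] [].
have ffP_neq0 : (#|P| ^_ #|D|)%:R != 0 :> R.
  by rewrite pnatr_eq0 -lt0n ffact_gt0 subset_leq_card.
apply/eqP; rewrite eqr_div ?card_draws_neq0 // -!natrM.
by rewrite card_draws_containing // cards_draws mulnC.
Qed.

End DesignExpectation.

Definition is_assignment (R : realType) (N : nat) (Z : 'I_N -> R) :=
  forall i, Z i = 1 \/ Z i = -1.

Definition treated (R : realType) (N : nat) (Z : 'I_N -> R) (i : 'I_N) : R :=
  (1 + Z i) / 2.

Section DifferenceInMeans.
Variables (R : realType) (N K KT : nat).

Definition dim_weight (Z : 'I_N -> R) (i : 'I_N) : R :=
  treated Z i / NT R N K KT - (1 - treated Z i) / NC R N K KT.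

Lemma tau_DIM_weighted Y Z : is_assignment Z ->
  tau_DIM K KT Y Z = \sum_(i < N) dim_weight Z i * Y Z i.
Proof.
have m1_neq1 : ((-1 : R) == 1) = false by apply/eqP; lra.
move=> Zpm; rewrite /tau_DIM !mulr_sumr big_mkcond [\sum_(i | Z i == -1) _]big_mkcond.
rewrite -sumrB; apply: eq_bigr => i _.
rewrite /dim_weight /treated.
have half2 : (1 + 1) / 2 = 1 :> R by rewrite divff //; apply/eqP; lra.
by have [-> | ->] := Zpm i; rewrite eqxx ?m1_neq1 ?(eq_sym 1) ?m1_neq1 ?half2 /=; ring.
Qed.
End DifferenceInMeans.

Section LinearModel.
Variables (R : realType) (N M : nat) (w : 'I_N -> 'I_M -> R).
Hypothesis rowsum_gt0 : forall i, 0 < rowsum w i.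
Hypothesis colsum_gt0 : forall s, 0 < colsum w s.
Variables (alpha beta gamma : 'I_N -> R) (Y : ('I_N -> R) -> 'I_N -> R).

Definition linear_outcomes := forall Z : 'I_N -> R, is_assignment Z ->
  forall i, Y Z i = alpha i + beta i * Z i + gamma i * exposure w Z i.

Hypothesis Y_linear : linear_outcomes.

Lemma exposure_cst c i : exposure w (fun _ => c) i = c.
Proof.
by rewrite (exposureE rowsum_gt0 colsum_gt0) -mulr_suml sum_exposure_weight ?mul1r.
Qed.

Lemma tau_linear : tau Y = 2 / N%:R * \sum_(i < N) (beta i + gamma i).
Proof.
rewrite /tau !mulr_sumr; apply: eq_bigr => i _.
by rewrite !Y_linear ?exposure_cst => [|j|j]; [ring | right | left].
Qed.

Lemma E_tau_DIM_linear P K KT :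
  E_design P KT (tau_DIM K KT Y) =
  \sum_(i < N) (alpha i * E_design P KT (fun Z => dim_weight K KT Z i)
     + beta i * E_design P KT (fun Z => dim_weight K KT Z i * Z i)
     + gamma i * \sum_(j < N) exposure_weight w i j
                   * E_design P KT (fun Z => dim_weight K KT Z i * Z j)).
Proof.
have assign_pm1 S : is_assignment (assign R S) by move=> i; rewrite /assign; case: ifP; auto.
rewrite (@eq_E_design _ _ _ _ _ (fun Z =>
     \sum_(i < N) (alpha i * dim_weight K KT Z i
     + beta i * (dim_weight K KT Z i * Z i)
     + gamma i * \sum_(j < N) exposure_weight w i j * (dim_weight K KT Z i * Z j)))).
  rewrite E_design_sum; apply: eq_bigr => i _.
  rewrite 2!E_designD !E_designZ E_design_sum.
  by under eq_bigr do rewrite E_designZ.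
move=> S _; rewrite tau_DIM_weighted //; apply: eq_bigr => i _.
rewrite Y_linear // (exposureE rowsum_gt0 colsum_gt0).
set d := dim_weight K KT (assign R S) i.
have -> : \sum_(j < N) exposure_weight w i j * (d * assign R S j)
        = d * \sum_(j < N) exposure_weight w i j * assign R S j.
  by rewrite mulr_sumr; apply: eq_bigr => j _; ring.
ring.
Qed.
End LinearModel.

Lemma balanced_partition_gt0 N K (P : {set {set 'I_N}}) :
  balanced_partition P K -> (0 < K)%N -> (0 < N)%N.
Proof.
case/and3P => /and3P[_ _ P_set0] /eqP card_P _ K_gt0.
have [B BP] : exists B, B \in P by apply/card_gt0P; rewrite card_P.
have [i _] : exists i, i \in B by apply/set0Pn; apply: contraNneq P_set0 => <-.
by case: (N) i => [[]|].
Qed.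

Lemma natr_pred (R : pzRingType) n : (0 < n)%N -> n.-1%:R = n%:R - 1 :> R.
Proof. by move=> n_gt0; rewrite -subn1 natrB. Qed.

Definition dim_bias_factor (R : realType) (N K : nat) : R :=
  2 / N%:R * (K%:R / (K%:R - 1)).

Lemma dim_bias_factor_gt0 (R : realType) N K :
  (0 < N)%N -> (1 < K)%N -> 0 < dim_bias_factor R N K.
Proof.
by move=> N_gt0 K_gt1; rewrite !mulr_gt0 ?invr_gt0 ?ltr0n ?subr_gt0 ?ltr1n // ltnW.
Qed.

Section ClusterDesign.
Variables (R : realType) (N K KT : nat) (P : {set {set 'I_N}}).
Hypothesis P_balanced : balanced_partition P K.
Hypothesis KT_range : (0 < KT < K)%N.
Local Notation E := (@E_design R N P KT).

Let P_partition : partition P [set: 'I_N].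
Proof. by case/and3P: P_balanced. Qed.

Let card_P : #|P| = K.
Proof. by case/and3P: P_balanced => _ /eqP. Qed.

Let KT_gt0 : (0 < KT)%N. Proof. by case/andP: KT_range. Qed.
Let KT_lt_K : (KT < K)%N. Proof. by case/andP: KT_range. Qed.
Let KT_le : (KT <= #|P|)%N. Proof. by rewrite card_P ltnW. Qed.
Let N_neq0 : N%:R != 0 :> R.
Proof.
by rewrite pnatr_eq0 -lt0n (balanced_partition_gt0 P_balanced) // (ltn_trans KT_gt0).
Qed.
Let K_neq0 : K%:R != 0 :> R.
Proof. by rewrite pnatr_eq0 -lt0n (ltn_trans KT_gt0). Qed.
Let KT_neq0 : KT%:R != 0 :> R. Proof. by rewrite pnatr_eq0 -lt0n. Qed.
Let K_KT_neq0 : K%:R - KT%:R != 0 :> R.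
Proof. by rewrite subr_eq0 eqr_nat gtn_eqF. Qed.
Let K1_neq0 : K%:R - 1 != 0 :> R.
Proof. by rewrite subr_eq0 (_ : 1 = 1%:R) // eqr_nat gtn_eqF // (leq_ltn_trans KT_gt0). Qed.

Lemma pblock_in_P i : pblock P i \in P.
Proof. by rewrite pblock_mem // (cover_partition P_partition) inE. Qed.

Lemma mem_pblock_self i : i \in pblock P i.
Proof. by rewrite mem_pblock (cover_partition P_partition) inE. Qed.

Lemma treated_assign (S : {set {set 'I_N}}) i : S \subset P ->
  treated (assign R S) i = (pblock P i \in S)%:R.
Proof.
move=> sSP; rewrite /treated /assign; have -> : (i \in cover S) = (pblock P i \in S).
  apply/bigcupP/idP => [[B BS iB]|]; last by exists (pblock P i); rewrite ?mem_pblock_self.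
  by rewrite (def_pblock (partition_trivIset P_partition) (subsetP sSP B BS) iB).
by case: (_ \in S) => /=; field.
Qed.

Lemma E_treated i : E (fun Z => treated Z i) = KT%:R / K%:R.
Proof.
rewrite (E_design_event KT_le (D := [set pblock P i])) ?sub1set ?pblock_in_P //.
  by rewrite cards1 !ffactn1 card_P.
by move=> S sSP; rewrite treated_assign // sub1set.
Qed.

Lemma E_treated_mul i j : E (fun Z => treated Z i * treated Z j) =
  if j \in pblock P i then KT%:R / K%:R
  else KT%:R * (KT%:R - 1) / (K%:R * (K%:R - 1)).
Proof.
case: ifP => ji.
  have pj : pblock P j = pblock P i.
    exact: def_pblock (partition_trivIset P_partition) (pblock_in_P i) ji.
  rewrite -(E_treated i); apply: eq_E_design => S sSP.
  by rewrite !treated_assign // pj; case: (_ \in S); rewrite ?mulr1 ?mulr0.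
have neq_ij : pblock P i != pblock P j.
  by apply: contraFN ji => /eqP ->; rewrite mem_pblock_self.
rewrite (E_design_event KT_le (D := [set pblock P i; pblock P j])).
- rewrite cards2 neq_ij card_P !ffactnS !ffactn0 !muln1 !natrM !natr_pred //.
  exact: ltn_trans KT_lt_K.
- by rewrite subUset !sub1set !pblock_in_P.
move=> S sSP; rewrite !treated_assign // subUset !sub1set.
by case: (_ \in S); case: (_ \in S); rewrite ?mulr1 ?mulr0.
Qed.

Hypothesis K_dvd_N : (K %| N)%N.

Lemma NT_E : NT R N K KT = N%:R * (KT%:R / K%:R).
Proof.
by rewrite /NT natrM -[in RHS](divnK K_dvd_N) natrM; field.
Qed.

Lemma NC_E : NC R N K KT = N%:R * (1 - KT%:R / K%:R).
Proof. by rewrite /NC NT_E; ring. Qed.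

Lemma E_dim_weight i : E (fun Z => dim_weight K KT Z i) = 0.
Proof.
set a := (NT R N K KT)^-1; set b := (NC R N K KT)^-1.
have -> : (fun Z => dim_weight K KT Z i) = (fun Z => (a + b) * treated Z i + - b).
  by apply: funext => Z; rewrite /dim_weight /a /b; ring.
rewrite E_designD E_designZ E_design_cst // E_treated /a /b NT_E NC_E.
by field; rewrite K_neq0 K_KT_neq0 N_neq0 KT_neq0.
Qed.

Lemma E_dim_weight_mul i j : E (fun Z => dim_weight K KT Z i * Z j)
  = 2 / N%:R - (j \notin pblock P i)%:R * dim_bias_factor R N K.
Proof.
(* Expand in the indicators, using Z j = 2 * treated Z j - 1. *)
have -> : (fun Z => dim_weight K KT Z i * Z j) = (fun Z =>
    2 * ((NT R N K KT)^-1 + (NC R N K KT)^-1) * (treated Z i * treated Z j)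
    + (- ((NT R N K KT)^-1 + (NC R N K KT)^-1) * treated Z i
    + (- (2 * (NC R N K KT)^-1) * treated Z j + (NC R N K KT)^-1))).
  apply: funext => Z; rewrite /dim_weight /treated.
  by move: (NT R N K KT)^-1 (NC R N K KT)^-1 => a b; field.
rewrite !E_designD !E_designZ E_design_cst // E_treated_mul !E_treated NT_E NC_E.
rewrite /dim_bias_factor.
by case: ifP => _ /=; field; rewrite ?K_neq0 ?K_KT_neq0 ?N_neq0 ?KT_neq0 ?K1_neq0.
Qed.

Variables (M : nat) (w : 'I_N -> 'I_M -> R).
Hypothesis rowsum_gt0 : forall i, 0 < rowsum w i.
Hypothesis colsum_gt0 : forall s, 0 < colsum w s.

Lemma bias_linear_outcomes alpha beta gamma Y :
  linear_outcomes w alpha beta gamma Y ->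
  tau Y - E (tau_DIM K KT Y) = dim_bias_factor R N K *
    \sum_(i < N) gamma i * \sum_(j < N | j \notin pblock P i) exposure_weight w i j.
Proof.
move=> Y_linear.
have exposure_moment i :
    \sum_(j < N) exposure_weight w i j * E (fun Z => dim_weight K KT Z i * Z j)
    = 2 / N%:R - dim_bias_factor R N K
                 * \sum_(j < N | j \notin pblock P i) exposure_weight w i j.
  under eq_bigr do rewrite E_dim_weight_mul mulrBr.
  rewrite sumrB -mulr_suml sum_exposure_weight // mul1r mulr_sumr [in RHS]big_mkcond.
  congr (_ - _); apply: eq_bigr => j _.
  by case: (j \notin _); rewrite /= ?mul1r ?mul0r ?mulr0 // mulrC.
rewrite (tau_linear rowsum_gt0 colsum_gt0 Y_linear).
rewrite (E_tau_DIM_linear rowsum_gt0 colsum_gt0 Y_linear).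
rewrite !mulr_sumr -sumrB; apply: eq_bigr => i _.
by rewrite exposure_moment E_dim_weight E_dim_weight_mul mem_pblock_self /=; ring.
Qed.
End ClusterDesign.

Lemma sup_attained (R : realType) (S : set R) x : S x -> ubound S x -> sup S = x.
Proof.
move=> Sx ubx; apply/eqP; rewrite eq_le ge_sup //; last by exists x.
by apply: ub_le_sup => //; exists x.
Qed.

Lemma norm_le_max_bounds (R : realType) (G0 G1 x : R) :
  G0 <= x <= G1 -> `|x| <= Num.max `|G0| `|G1|.
Proof.
move=> /andP[G0x xG1]; rewrite le_max.
have := ler_norm G1; have := ler_norm (- G0); rewrite normrN.
have [x_ge0|x_lt0] := lerP 0 x; [rewrite (ger0_norm x_ge0) | rewrite (ltr0_norm x_lt0)].
  by move=> *; apply/orP; right; lra.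
by move=> *; apply/orP; left; lra.
Qed.

Lemma sup_abs_weighted_sum (R : realType) (I : finType) (h : I -> R) (c G0 G1 : R) :
  0 <= c -> G0 <= G1 -> (forall i, 0 <= h i) ->
  sup [set c * `|\sum_i g i * h i| | g in [set g : I -> R | forall i, G0 <= g i <= G1]]
  = c * Num.max `|G0| `|G1| * \sum_i h i.
Proof.
move=> c_ge0 G01 h_ge0.
have sumh_ge0 : 0 <= \sum_i h i by apply: sumr_ge0.
apply: sup_attained.
  have [G G_box ->] : exists2 G, G0 <= G <= G1 & Num.max `|G0| `|G1| = `|G|.
    by have [G01'|G10'] := leP `|G0| `|G1|; [exists G1 | exists G0]; rewrite ?lexx ?G01.
  exists (fun _ => G) => //.
  by rewrite -mulr_sumr normrM (ger0_norm sumh_ge0) mulrA.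
move=> _ [g g_box <-]; rewrite -mulrA ler_wpM2l //.
apply: le_trans (ler_norm_sum _ _ _) _; rewrite mulr_sumr; apply: ler_sum => i _.
by rewrite normrM (ger0_norm (h_ge0 i)) ler_wpM2r // norm_le_max_bounds.
Qed.

Lemma is_minimizer_scale (R : realType) N K (f g : {set {set 'I_N}} -> R) c P :
  0 < c -> (forall Q, balanced_partition Q K -> f Q = c * g Q) ->
  is_minimizer K f P <-> is_minimizer K g P.
Proof.
move=> c_gt0 fE.
by split=> -[P_bal P_min]; split=> // Q Q_bal; have := P_min Q Q_bal; rewrite !fE // ler_pM2l.
Qed.

Section WorstBias.
Variables (R : realType) (N M K KT : nat) (w : 'I_N -> 'I_M -> R).
Hypothesis w_ge0 : forall i s, 0 <= w i s.
Hypothesis rowsum_gt0 : forall i, 0 < rowsum w i.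
Hypothesis colsum_gt0 : forall s, 0 < colsum w s.
Hypothesis KT_range : (0 < KT < K)%N.
Hypothesis K_dvd_N : (K %| N)%N.

Lemma worst_bias_E P alpha beta G0 G1 : balanced_partition P K -> G0 <= G1 ->
  worst_bias w K KT alpha beta G0 G1 P
  = dim_bias_factor R N K * Num.max `|G0| `|G1| * Hobj w P.
Proof.
move=> P_bal G01.
have c_gt0 : 0 < dim_bias_factor R N K.
  have K_gt1 : (1 < K)%N by case/andP: KT_range => KT_gt0; apply: leq_ltn_trans.
  by rewrite dim_bias_factor_gt0 // (balanced_partition_gt0 P_bal) // ltnW.
rewrite /worst_bias (eq_imagel (f' := fun g => dim_bias_factor R N K *
   `|\sum_i g i * \sum_(j < N | j \notin pblock P i) exposure_weight w i j|)).
  apply: sup_abs_weighted_sum => // [|i]; first exact: ltW.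
  by apply: sumr_ge0 => j _; apply: exposure_weight_ge0.
move=> g _; have g_linear : linear_outcomes w alpha beta g (lin_outcome w alpha beta g) by [].
rewrite (bias_linear_outcomes P_bal KT_range K_dvd_N rowsum_gt0 colsum_gt0 g_linear).
by rewrite normrM gtr0_norm.
Qed.
End WorstBias.

Theorem lemma1 (R : realType) (N M K KT : nat) (w : 'I_N -> 'I_M -> R)
  (hw : forall i s, 0 <= w i s)
  (hrow : forall i, 0 < rowsum w i)
  (hcol : forall s, 0 < colsum w s)
  (hK : (2 <= K)%N) (hKN : (K %| N)%N) (hKT : (0 < KT < K)%N) :
  (forall (P : {set {set 'I_N}}) (alpha beta gamma : 'I_N -> R)
          (Y : ('I_N -> R) -> 'I_N -> R),
     balanced_partition P K ->
     (forall Z : 'I_N -> R, (forall i, Z i = 1 \/ Z i = -1) ->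
        forall i, Y Z i = alpha i + beta i * Z i + gamma i * exposure w Z i) ->
     tau Y - E_design P KT (tau_DIM K KT Y)
     = 2 / N%:R * (K%:R / (K%:R - 1)) *
       \sum_(i < N) \sum_(j < N | j \notin finset.pblock P i)
          gamma i * \sum_(s < M) (w i s / rowsum w i) * (w j s / colsum w s))
  /\
  (forall (G0 G1 : R) (alpha beta : 'I_N -> R),
     G0 <= G1 -> ~ (G0 = 0 /\ G1 = 0) ->
     forall P : {set {set 'I_N}},
       is_minimizer K (worst_bias w K KT alpha beta G0 G1) P
       <-> is_minimizer K (Hobj w) P).
Proof.
split=> [P alpha beta gamma Y P_bal Y_linear | G0 G1 alpha beta G01 G_neq0 P].
  rewrite (bias_linear_outcomes P_bal hKT hKN hrow hcol Y_linear); congr (_ * _).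
  by apply: eq_bigr => i _; rewrite mulr_sumr.
have [P_bal|P_nbal] := boolP (balanced_partition P K); last first.
  by split=> -[P_bal]; rewrite P_bal in P_nbal.
apply: (@is_minimizer_scale _ _ _ _ _ (dim_bias_factor R N K * Num.max `|G0| `|G1|)).
  rewrite mulr_gt0 ?dim_bias_factor_gt0 ?(balanced_partition_gt0 P_bal) ?(ltnW hK) //.
  rewrite lt_max !normr_gt0 -negb_and.
  by apply/negP => /andP[/eqP G0_0 /eqP G1_0]; apply: G_neq0.
by move=> Q Q_bal; rewrite (worst_bias_E hw hrow hcol hKT hKN _ _ Q_bal G01).
Qed.
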